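(* Let $T$ be a finite tree, let $k\ge 1$, and let $S=(W_1,\dots,W_k)$ be a covering strategy for $T$ with $k$ robots (at prescribed starting vertices) whose length $l(S)$ is minimum among all such covering strategies. Then for each $i$ the set of edges traversed by $W_i$ can be decomposed into two sets: the edges of a path $P(W_i)$ and the edges of a forest $F(W_i)$ (subgraphs of $T$), such that: (a) each edge of $P(W_i)$ is traversed exactly once by the $i$-th robot; (b) each edge of $F(W_i)$ is traversed exactly twice by the $i$-th robot and is never traversed by any other robot; (c) each connected component $C$ of $F(W_i)$ satisfies $\left|V(C)\cap \bigcup_{r=1}^k V(P(W_r))\right|=1$; (d) for every pair $j\neq l$, $V(F(W_j))\cap V(F(W_l))\subseteq \bigcup_{r=1}^k V(P(W_r))$.
   Context: Model: $T=(V,E)$ is a tree; robots move along edges, one edge per unit time step, or stay put. A walk is a sequence $W=(u_1,\dots,u_m)$ of vertices of $T$ in which consecutive terms are equal or adjacent; the robot following it stays at $u_m$ afterwards. The time of $W$ is $t(W)=m-1$; the length $l(W)$ is the number of indices $i\in\{1,\dots,m-1\}$ with $u_i\neq u_{i+1}$ (i.e. the number of edge traversals, counted with multiplicity). A strategy with $k$ robots is a $k$-tuple $S=(W_1,\dots,W_k)$ of walks, where $W_i$ starts at the prescribed starting vertex of robot $i$; it is covering if every vertex of $T$ lies in some $W_i$. Its length is $l(S)=\sum_{i=1}^k l(W_i)$. For a graph $G$, $V(G)$ is its vertex set. *)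

From mathcomp Require Import all_boot.
Set Implicit Arguments. Unset Strict Implicit. Unset Printing Implicit Defensive.

Section Defs.
Variable V : finType.

Definition is_tree (e : rel V) : Prop :=
  [/\ symmetric e, irreflexive e, (forall x y : V, connect e x y)
    & ~ (exists c : seq V, ucycleb e c && (2 < size c))].

Definition step_rel (e : rel V) : rel V := fun x y => (x == y) || e x y.

Definition walk_from (e : rel V) (x : V) (w : seq V) : bool :=
  if w is y :: t then (y == x) && path (step_rel e) y t else false.

Definition steps (w : seq V) : seq (V * V) := zip w (behead w).

Definition wlen (w : seq V) : nat := count (fun p => p.1 != p.2) (steps w).

(* edges are represented as 2-element sets {u, v} *)
Definition edge_of (p : V * V) : {set V} := [set p.1; p.2].

Definition trav (w : seq V) (E : {set V}) : nat :=
  count (fun p => (p.1 != p.2) && (edge_of p == E)) (steps w).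

Definition wedges (w : seq V) : {set {set V}} :=
  [set E | trav w E > 0].

Definition is_tpath (e : rel V) (p : seq V) : bool :=
  if p is x :: t then uniq p && path e x t else false.

Definition pedges (p : seq V) : {set {set V}} :=
  [set edge_of q | q in steps p].

Definition fverts (F : {set {set V}}) : {set V} := \bigcup_(E in F) E.

Definition fadj (F : {set {set V}}) : rel V := fun x y => [set x; y] \in F.

Definition fcomp (F : {set {set V}}) (x : V) : {set V} :=
  [set y | connect (fadj F) x y].

Definition is_strategy (e : rel V) (k : nat) (s : 'I_k -> V)
  (W : 'I_k -> seq V) : Prop := forall i, walk_from e (s i) (W i).

Definition covering (k : nat) (W : 'I_k -> seq V) : Prop :=
  forall v : V, exists i, v \in W i.

Definition slen (k : nat) (W : 'I_k -> seq V) : nat := \sum_(i < k) wlen (W i).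

End Defs.

From mathcomp Require Import all_boot zify.
Set Implicit Arguments. Unset Strict Implicit. Unset Printing Implicit Defensive.

(* Deleting an edge xy splits the tree into two sides, so a walk crosses xy an
   odd number of times iff its endpoints lie on different sides, i.e. iff the
   loop erasure P(W) of the walk uses xy.  In an optimal strategy no robot
   crosses an edge three times: between consecutive crossings the walk comes
   back to the same side, and swapping the two loops so obtained saves two
   crossings.  Hence edges of P(W) are crossed once and the other traversed
   edges, F(W), twice.  A vertex of W_i off P(W_i) lies on an excursion
   a b ... b a leaving P(W_i) through a single edge; if another robot visited
   it, that robot could perform the excursion instead, saving two steps.  This
   gives the exclusivity in (b) and (d), and (c) holds because every excursion
   returns to the vertex of P(W_i) where it started. *)

(** * Walks as sequences of steps *)

Section Steps.
Variable V : finType.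
Implicit Types (x y a b : V) (u l r : seq V) (p : V * V).

Lemma steps_cons x y u : steps (x :: y :: u) = (x, y) :: steps (y :: u).
Proof. by []. Qed.

Lemma steps_cat x u r : steps (x :: u ++ r) = steps (x :: u) ++ steps (last x u :: r).
Proof.
by elim: u x => [|y u IH] x /=; [case: r | rewrite steps_cons IH].
Qed.

Lemma steps_cat_cons x u y r :
  steps (x :: u ++ y :: r) = steps (x :: u) ++ (last x u, y) :: steps (y :: r).
Proof. exact: steps_cat. Qed.

Lemma wlen_cat x u r : wlen (x :: u ++ r) = wlen (x :: u) + wlen (last x u :: r).
Proof. by rewrite /wlen steps_cat count_cat. Qed.

Lemma wlen_cat_cons x u y r :
  wlen (x :: u ++ y :: r) = wlen (x :: u) + (last x u != y) + wlen (y :: r).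
Proof. by rewrite /wlen steps_cat_cons count_cat /= addnA. Qed.

Lemma mem_steps p l : p \in steps l -> (p.1 \in l) && (p.2 \in l).
Proof.
case: l => [|x u] //; elim: u x => [|y u IH] x //.
rewrite steps_cons inE => /orP [/eqP -> | /IH /andP [H1 H2]] /=.
  by rewrite !inE !eqxx orbT.
by rewrite inE H1 inE H2 !orbT.
Qed.

Lemma path_steps (R : rel V) x u :
  path R x u = all (fun p => R p.1 p.2) (steps (x :: u)).
Proof. by elim: u x => [|y u IH] x //; rewrite steps_cons /= IH. Qed.

Lemma path_cat_cons (R : rel V) x u y r :
  path R x (u ++ y :: r) = [&& path R x u, R (last x u) y & path R y r].
Proof. by rewrite cat_path. Qed.

Lemma steps_infix l x u r : {subset steps (x :: u) <= steps (l ++ x :: u ++ r)}.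
Proof.
move=> p Hp; have Hr : p \in steps (x :: u ++ r) by rewrite steps_cat mem_cat Hp.
by case: l => [|y l] //; rewrite cat_cons steps_cat_cons mem_cat inE Hr !orbT.
Qed.

Lemma split_first_step (P : pred (V * V)) x u : has P (steps (x :: u)) ->
  exists u1 y u2, [/\ u = u1 ++ y :: u2, P (last x u1, y),
    ~~ has P (steps (x :: u1)) &
    count P (steps (x :: u)) = (count P (steps (y :: u2))).+1].
Proof.
elim: u x => [|z r IH] x //; rewrite steps_cons /=.
have [Pxz _|nPxz /= /IH [u1 [y [u2 [-> Py N1 ->]]]]] := boolP (P (x, z)).
  by exists [::], z, r; rewrite Pxz.
by exists (z :: u1), y, u2; rewrite steps_cons /= (negbTE nPxz) N1.
Qed.

Lemma split_last_mem (X : pred V) x l : X x ->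
  exists l1 l2, [/\ l = l1 ++ l2, X (last x l1) & all (predC X) l2].
Proof.
move=> Xx; elim/last_ind: l => [|l z [l1 [l2 [-> Xl Al]]]].
  by exists [::], [::].
have [Xz|nXz] := boolP (X z).
  by exists (rcons (l1 ++ l2) z), [::]; rewrite cats0 last_rcons.
by exists l1, (rcons l2 z); rewrite rcons_cat all_rcons /= nXz Al.
Qed.

Lemma split_excursion (X : pred V) x u v : X x -> X (last x u) ->
  v \in u -> ~~ X v -> exists u1 m d w,
  [/\ u = u1 ++ m ++ d :: w, X (last x u1), X d, all (predC X) m & v \in m].
Proof.
move=> Xx Xt Hv nXv; case/splitPr: Hv Xt => l1 l2; rewrite last_cat /= => Xt.
have /split_find [d q1 q2 Xd nq1] : has X l2.
  case: l2 Xt => [|z l2]; first by rewrite /= (negbTE nXv).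
  by move=> Xt; apply/hasP; exists (last z l2); rewrite ?mem_last.
have [u1 [m [-> Xu1 Am]]] := split_last_mem l1 Xx.
exists u1, (m ++ v :: q1), d, q2; split => //.
- by rewrite cat_rcons -!catA.
- by rewrite all_cat /= nXv Am all_predC nq1.
- by rewrite mem_cat mem_head orbT.
Qed.

Definition cross x y : pred (V * V) := fun p => (p == (x, y)) || (p == (y, x)).

Lemma cross_swap x y a b : cross x y (a, b) = cross x y (b, a).
Proof. by rewrite /cross !xpair_eqE orbC !(andbC (b == _)). Qed.

Lemma crossP x y a b : cross x y (a, b) -> (a = x /\ b = y) \/ (a = y /\ b = x).
Proof.
by rewrite /cross !xpair_eqE => /orP [] /andP [/eqP -> /eqP ->]; [left | right].
Qed.

Lemma has_cross_mem x y l : has (cross x y) (steps l) -> (x \in l) && (y \in l).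
Proof.
case/hasP => [[a b] /mem_steps /andP [/= Ha Hb] /crossP].
by case=> [[Ea Eb] | [Ea Eb]]; subst; rewrite Ha Hb.
Qed.

Lemma edge_of_cross x y p : x != y -> (edge_of p == [set x; y]) = cross x y p.
Proof.
case: p => a b xy; rewrite /edge_of /cross /= !xpair_eqE.
apply/eqP/idP => [E | /orP [] /andP [/eqP -> /eqP ->] //]; last exact: setUC.
have Hx : x \in [set a; b] by rewrite E set21.
have Hy : y \in [set a; b] by rewrite E set22.
move: Hx Hy xy; rewrite !in_set2.
by case/orP => /eqP ->; case/orP => /eqP ->; rewrite ?eqxx ?orbT.
Qed.

Lemma trav_cross w x y : x != y -> trav w [set x; y] = count (cross x y) (steps w).
Proof.
move=> xy; apply: eq_count => p; rewrite edge_of_cross //; apply: andb_idl.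
by case: p => a b /crossP [] [-> ->]; rewrite // eq_sym.
Qed.

Lemma mem_pedges2 l x y : x != y -> ([set x; y] \in pedges l) = has (cross x y) (steps l).
Proof.
move=> xy; apply/imsetP/hasP => [[p Hp /eqP] | [p Hp Cp]].
  by rewrite eq_sym edge_of_cross // => Cp; exists p.
by exists p => //; apply/eqP; rewrite eq_sym edge_of_cross.
Qed.

Lemma wedges_edge w E : E \in wedges w -> exists x y, E = [set x; y].
Proof.
rewrite inE /trav -has_count => /hasP [[x y] _ /andP [_ /eqP <-]].
by exists x, y.
Qed.

Lemma fadj_sym (F : {set {set V}}) : symmetric (fadj F).
Proof. by move=> x y; rewrite /fadj setUC. Qed.

(* P(W) and F(W) of the paper; [shorten] erases the loops of W. *)
Definition walk_spine (w : seq V) : seq V :=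
  if w is x :: u then x :: shorten x u else [::].

Definition walk_forest (w : seq V) : {set {set V}} :=
  wedges w :\: pedges (walk_spine w).

End Steps.

(** * Cutting a tree at an edge *)

Section Tree.
Variable V : finType.
Variable e : rel V.
Hypothesis e_tree : is_tree e.
Let e_sym : symmetric e. Proof. by case: e_tree. Qed.
Let e_irr : irreflexive e. Proof. by case: e_tree. Qed.
Let e_conn : forall x y : V, connect e x y. Proof. by case: e_tree. Qed.
Let e_acyc : ~ (exists c : seq V, ucycleb e c && (2 < size c)).
Proof. by case: e_tree. Qed.
Implicit Types (x y a b c d v z : V) (u l m p r : seq V).

Local Notation srel := (step_rel e).

Lemma srel_refl x : srel x x.
Proof. by rewrite /step_rel eqxx. Qed.

Lemma srel_sym : symmetric srel.
Proof. by move=> x y; rewrite /step_rel eq_sym e_sym. Qed.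

Lemma srel_edge x y : e x y -> srel x y.
Proof. by rewrite /step_rel => ->; rewrite orbT. Qed.

Lemma edge_neq x y : e x y -> x != y.
Proof. by apply: contraTneq => ->; rewrite e_irr. Qed.

Lemma srel_neq_edge x y : srel x y -> x != y -> e x y.
Proof. by case/orP => [/eqP ->|//]; rewrite eqxx. Qed.

Lemma uniq_srel_path x p : path srel x p -> uniq (x :: p) -> path e x p.
Proof.
elim: p x => [|y p IH] x //= /andP [sxy Pp] /andP [].
by rewrite inE negb_or => /andP [xy _] Up; rewrite srel_neq_edge //= IH.
Qed.

Lemma shorten_walk x u : path srel x u ->
  [/\ path e x (shorten x u), uniq (x :: shorten x u),
      last x (shorten x u) = last x u & {subset shorten x u <= u}].
Proof. by case/shortenP => p Pp Up Sp; split => //; exact: uniq_srel_path. Qed.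

(* [connect (avoid x y)] is connectivity in T with the edge xy deleted. *)
Definition avoid x y : rel V := fun a b => srel a b && ~~ cross x y (a, b).

Lemma avoid_sym x y : symmetric (avoid x y).
Proof. by move=> a b; rewrite /avoid srel_sym cross_swap. Qed.

Lemma connect_avoidC x y a b : connect (avoid x y) a b = connect (avoid x y) b a.
Proof. exact/sym_connect_sym/avoid_sym. Qed.

Lemma connect_avoid_walk x y a u z : path srel a u ->
  ~~ has (cross x y) (steps (a :: u)) -> z \in a :: u -> connect (avoid x y) a z.
Proof.
rewrite path_steps => /allP Pu /hasPn Nu; apply: path_connect.
by rewrite path_steps; apply/allP => p Hp; rewrite /avoid Pu //= -surjective_pairing Nu.
Qed.

Lemma avoid_cut x y : e x y -> ~~ connect (avoid x y) x y.
Proof.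
move=> exy; apply/negP => /connectP [p Pp].
case: (shortenP Pp) => q Pq Uq _ Ey.
have Pe : path e x q by apply: uniq_srel_path Uq; apply: sub_path Pq => a b /andP [].
case: q Pq Uq Pe Ey => [|z [|z' q]].
- by move=> _ _ _ /= Ey; move: exy; rewrite Ey e_irr.
- by case/andP => /andP [_]; rewrite /cross => + _ _ _ /= Ey; rewrite Ey eqxx.
move=> _ Uq Pe Ey; apply: e_acyc; exists [:: x, z, z' & q].
by rewrite /ucycleb Uq /cycle rcons_path Pe -Ey e_sym exy.
Qed.

Lemma avoid_cut_cross x y a b : e x y -> cross x y (a, b) -> ~~ connect (avoid x y) a b.
Proof.
move=> exy /crossP [] [-> ->]; first exact: avoid_cut.
by rewrite connect_avoidC; exact: avoid_cut.
Qed.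

Lemma avoid_sides x y z : connect (avoid x y) z x || connect (avoid x y) z y.
Proof.
have /connectP [p] := e_conn z x.
elim: p z => [|w p IH] z /=; first by move=> _ ->; rewrite connect0.
case/andP => ezw Pp Ex; have Hw := IH w Pp Ex.
have [/crossP [] [-> _]|Nzw] := boolP (cross x y (z, w)); rewrite ?connect0 ?orbT //.
have Kzw : connect (avoid x y) z w by apply: connect1; rewrite /avoid srel_edge.
by case/orP: Hw => H; rewrite (connect_trans Kzw H) ?orbT.
Qed.

Lemma connect_avoid_cross x y a b v : e x y -> cross x y (a, b) ->
  connect (avoid x y) a v = ~~ connect (avoid x y) b v.
Proof.
move=> exy Cab; have /negP Nab := avoid_cut_cross exy Cab.
have Hv : connect (avoid x y) v a || connect (avoid x y) v b.
  by case/crossP: Cab => [] [-> ->]; rewrite ?avoid_sides // orbC avoid_sides.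
apply/idP/idP => [Kav|Kbv].
  by apply/negP => Kbv; apply: Nab; apply: connect_trans Kav _; rewrite connect_avoidC.
by case/orP: Hv => Hv; [rewrite connect_avoidC | rewrite connect_avoidC Hv in Kbv].
Qed.

Lemma connect_avoid_parity x y a u : e x y -> path srel a u ->
  connect (avoid x y) a (last a u) = ~~ odd (count (cross x y) (steps (a :: u))).
Proof.
move=> exy; elim: u a => [|b u IH] a; first by rewrite /= connect0.
case/andP => sab /IH {}IH; rewrite steps_cons /=.
have [Cab|Nab] := boolP (cross x y (a, b)).
  by rewrite (connect_avoid_cross _ exy Cab) IH add1n /= negbK.
have Kab : connect (avoid x y) a b by apply: connect1; rewrite /avoid sab Nab.
rewrite add0n -IH; apply/idP/idP => H; last exact: connect_trans Kab H.
by apply: connect_trans H; rewrite connect_avoidC.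
Qed.

Lemma cross_next x y a b c d : e x y -> cross x y (a, b) -> cross x y (c, d) ->
  connect (avoid x y) b c -> c = b /\ d = a.
Proof.
move=> exy /crossP [] [-> ->] /crossP [] [-> ->] //.
- by rewrite connect_avoidC => K; move: (avoid_cut exy); rewrite K.
- by move=> K; move: (avoid_cut exy); rewrite K.
Qed.

Lemma count_cross_uniq x y a p : uniq (a :: p) -> count (cross x y) (steps (a :: p)) <= 1.
Proof.
move=> Up; have [|N] := boolP (has (cross x y) (steps (a :: p))); last first.
  by move: N; rewrite has_count; case: (count _ _).
case/split_first_step => u1 [b [u2 [Ep C1 _ ->]]].
rewrite ltnS leqNgt -has_count; apply/negP => /has_cross_mem /andP [Hx Hy].
move: Up; rewrite Ep -cat_cons cat_uniq => /and3P [_ /hasPn Nd _].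
have Hl : last a u1 \in b :: u2 by case/crossP: C1 => [] [-> _].
by move: (Nd _ Hl); rewrite /= mem_last.
Qed.

Lemma walk_crosses_edge x p a b : path srel x p -> a \in x :: p -> b \in x :: p ->
  e a b -> has (cross a b) (steps (x :: p)).
Proof.
move=> Pp Ha Hb eab; apply/negPn/negP => N.
have := avoid_cut eab; rewrite (connect_trans _ (connect_avoid_walk Pp N Hb)) //.
by rewrite connect_avoidC; exact: connect_avoid_walk Pp N Ha.
Qed.

Lemma excursion_returns x p a b l d : path srel x p -> a \in x :: p -> d \in x :: p ->
  b \notin x :: p -> e a b -> path srel b l -> all [predC x :: p] l ->
  srel (last b l) d -> d = a /\ last b l = b.
Proof.
move=> Pp Ha Hd Nb eab Pl Al Sd.
have Np : ~~ has (cross a b) (steps (x :: p)).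
  by apply: contra Nb => /has_cross_mem /andP [].
have Kda : connect (avoid a b) d a.
  apply: connect_trans _ (connect_avoid_walk Pp Np Ha).
  by rewrite connect_avoidC (connect_avoid_walk Pp Np Hd).
have [/crossP [] [El Ed] //|Nld] := boolP (cross a b (last b l, d)).
  by move: Nb; rewrite -Ed Hd.
have Nl : ~~ has (cross a b) (steps (b :: l)).
  apply: contraL Ha => /has_cross_mem /andP [Hal _].
  by move: Hal; rewrite inE => /orP [/eqP -> // | /(allP Al)].
have Kbd : connect (avoid a b) b d.
  apply: (connect_avoid_walk (u := rcons l d)); first by rewrite rcons_path Pl Sd.
    by rewrite -cats1 steps_cat_cons has_cat /= (negbTE Nl) (negbTE Nld).
  by rewrite inE mem_rcons mem_head orbT.
by case/negP: (avoid_cut eab); rewrite connect_avoidC (connect_trans Kbd Kda).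
Qed.

Lemma rotate_closed_walk b l v : path srel b l -> last b l = b -> v \in b :: l ->
  exists l', [/\ path srel v l', last v l' = v, wlen (v :: l') = wlen (b :: l)
    & {subset b :: l <= v :: l'}].
Proof.
move=> Pl Ll; rewrite inE => /predU1P [-> | Hv]; first by exists l; split.
case/splitPr: Hv Pl Ll => p1 p2; rewrite cat_path last_cat /= => /and3P [P1 S1 P2] Ll.
exists (p2 ++ rcons p1 v); split.
- by rewrite cat_path P2 Ll rcons_path P1 S1.
- by rewrite last_cat last_rcons.
- by rewrite (wlen_cat v p2) Ll -cats1 !wlen_cat_cons [wlen [:: v]]/= addn0 addnC.
move=> z; rewrite inE => /predU1P [->|]; first by rewrite -{1}Ll -cat_cons mem_cat mem_last.
by rewrite !(inE, mem_cat, mem_rcons); do ?case/orP; move=> H; rewrite H ?orbT.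
Qed.

Lemma splice_closed_walk x m v l : path srel x m -> v \in x :: m ->
  path srel v l -> last v l = v ->
  exists m', [/\ path srel x m', wlen (x :: m') = wlen (x :: m) + wlen (v :: l)
    & {subset (x :: m) ++ (v :: l) <= x :: m'}].
Proof.
move=> Pm Hv Pl Ll; rewrite inE in Hv; case/predU1P: Hv Pm => [Evx Pm|/splitPr [p1 p2]].
  subst v; exists (l ++ m); split; first by rewrite cat_path Pl Ll.
    by rewrite wlen_cat Ll addnC.
  by move=> z; rewrite !(inE, mem_cat); do ?case/orP; move=> H; rewrite H ?orbT.
exists (p1 ++ v :: l ++ p2); split.
- by move: Pm; rewrite !cat_path /= => /and3P [-> -> P2]; rewrite cat_path Pl Ll P2.
- by rewrite !wlen_cat_cons -cat_cons wlen_cat Ll; lia.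
by move=> z; rewrite !(inE, mem_cat); do ?case/orP; move=> H; rewrite H ?orbT.
Qed.

Lemma cancel_crossings x u1 b l1 l2 r (a := last x u1) :
  last b l1 = b -> last a l2 = a -> a != b ->
  path srel x (u1 ++ b :: l1 ++ a :: l2 ++ b :: r) ->
  [/\ path srel x (u1 ++ a :: l2 ++ b :: l1 ++ r),
      (wlen (x :: u1 ++ a :: l2 ++ b :: l1 ++ r)).+2 =
        wlen (x :: u1 ++ b :: l1 ++ a :: l2 ++ b :: r)
    & {subset x :: u1 ++ b :: l1 ++ a :: l2 ++ b :: r <=
              x :: u1 ++ a :: l2 ++ b :: l1 ++ r}].
Proof.
move=> Ll1 Ll2 ab; rewrite !path_cat_cons -/a Ll1 Ll2.
case/and3P => P1 Sab /and3P [P2 _ /and3P [P3 _ P4]]; split.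
- by rewrite cat_path Ll1 P1 srel_refl P2 P3 P4 Sab.
- by rewrite !wlen_cat_cons wlen_cat -/a Ll1 Ll2 eqxx (eq_sym b) ab /=; lia.
by move=> z; rewrite !(inE, mem_cat); do ?case/orP; move=> H; rewrite H ?orbT.
Qed.

Lemma edge_cross_neq x y a b : e x y -> cross x y (a, b) -> a != b.
Proof. by move=> exy /crossP [] [-> ->]; rewrite ?(edge_neq exy) // eq_sym edge_neq. Qed.

(** * Optimal strategies *)

Section Optimal.
Variables (k : nat) (s : 'I_k -> V) (W : 'I_k -> seq V).
Hypothesis W_strategy : is_strategy e s W.
Hypothesis W_covering : covering W.
Hypothesis W_optimal : forall W' : 'I_k -> seq V,
  is_strategy e s W' -> covering W' -> slen W <= slen W'.
Implicit Types (i j : 'I_k) (w : seq V).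

Definition update (X : 'I_k -> seq V) i w : 'I_k -> seq V :=
  fun j => if j == i then w else X j.

Lemma slen_update X i w : slen (update X i w) + wlen (X i) = slen X + wlen w.
Proof.
rewrite /slen (bigD1 i) //= [in RHS](bigD1 i) //= /update eqxx.
by rewrite (eq_bigr (fun j => wlen (X j))) => [|j /negbTE -> //]; lia.
Qed.

Lemma update_strategy X i w : is_strategy e s X -> walk_from e (s i) w ->
  is_strategy e s (update X i w).
Proof. by move=> HX Hw j; rewrite /update; case: eqP => [->|]. Qed.

Lemma W_walk i : W i = s i :: behead (W i) /\ path srel (s i) (behead (W i)).
Proof.
by move: (W_strategy i); rewrite /walk_from; case: (W i) => [|y t] // /andP [/eqP -> ->].
Qed.

Lemma optimal_walk1 i w : walk_from e (s i) w -> {subset W i <= w} ->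
  wlen (W i) <= wlen w.
Proof.
move=> Hw Sw; have := W_optimal (update_strategy W_strategy Hw).
have := slen_update W i w; suff C : covering (update W i w) by move=> E /(_ C); lia.
move=> v; have [j Hj] := W_covering v; exists j; rewrite /update.
by case: eqP => [Eji|//]; apply: Sw; rewrite -Eji.
Qed.

Lemma optimal_walk2 i j wi wj : i != j -> walk_from e (s i) wi -> walk_from e (s j) wj ->
  {subset W i <= wi ++ wj} -> {subset W j <= wj} ->
  wlen (W i) + wlen (W j) <= wlen wi + wlen wj.
Proof.
move=> ij Hi Hj Si Sj; pose W1 := update W i wi; pose W2 := update W1 j wj.
have W1j : W1 j = W j by rewrite /W1 /update eq_sym (negbTE ij).
have W2i : W2 i = wi by rewrite /W2 /W1 /update (negbTE ij) eqxx.
have W2j : W2 j = wj by rewrite /W2 /update eqxx.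
have S2 : is_strategy e s W2 := update_strategy (update_strategy W_strategy Hi) Hj.
have C2 : covering W2.
  move=> v; have [l Hl] := W_covering v.
  have [Eli|li] := eqVneq l i.
    subst l; have := Si v Hl; rewrite mem_cat.
    by case/orP => H; [exists i; rewrite W2i | exists j; rewrite W2j].
  have [Elj|lj] := eqVneq l j; first by exists j; rewrite W2j Sj // -Elj.
  by exists l; rewrite /W2 /W1 /update (negbTE li) (negbTE lj).
have := W_optimal S2 C2; have := slen_update W1 j wj; have := slen_update W i wi.
rewrite W1j -/W1 -/W2; lia.
Qed.

Lemma count_cross_le2 i x y : e x y -> count (cross x y) (steps (W i)) <= 2.
Proof.
move=> exy; have [EW PW] := W_walk i; move: (behead (W i)) EW PW => u EW PW.
rewrite leqNgt EW; apply/negP => H3.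
have /split_first_step [u1 [b [u2 [Eu C1 _ E1]]]] : has (cross x y) (steps (s i :: u)).
  by rewrite has_count (leq_trans _ H3).
rewrite E1 ltnS in H3.
have /split_first_step [l1 [b2 [u3 [Eu2 C2 N2 E2]]]] : has (cross x y) (steps (b :: u2)).
  by rewrite has_count (leq_trans _ H3).
rewrite E2 ltnS -has_count in H3.
have /split_first_step [l2 [b3 [r [Eu3 C3 N3 _]]]] := H3.
move: PW; rewrite Eu Eu2 Eu3 => PW.
move: (PW); rewrite !path_cat_cons => /and3P [_ _ /and3P [Pl1 _ /and3P [Pl2 _ _]]].
(* the crossings alternate, so W i = .. a b (loop at b) b a (loop at a) a b .. *)
have [Ll1 Eb2] := cross_next exy C1 C2 (connect_avoid_walk Pl1 N2 (mem_last b l1)).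
subst b2; rewrite Ll1 in C2.
have [Ll2 Eb3] := cross_next exy C2 C3 (connect_avoid_walk Pl2 N3 (mem_last _ l2)).
subst b3.
have [Pw Lw Sw] := cancel_crossings Ll1 Ll2 (edge_cross_neq exy C1) PW.
have := @optimal_walk1 i (s i :: u1 ++ last (s i) u1 :: l2 ++ b :: l1 ++ r).
rewrite /walk_from eqxx Pw EW Eu Eu2 Eu3 -Lw => /(_ isT Sw).
by move/(leq_trans (leqnSn _)); rewrite ltnn.
Qed.

Lemma walk_steps_srel i (p : V * V) : p \in steps (W i) -> srel p.1 p.2.
Proof.
by have [EW PW] := W_walk i; move: PW; rewrite path_steps -EW => /allP; apply.
Qed.

Lemma walk_spineE i : walk_spine (W i) = s i :: shorten (s i) (behead (W i)).
Proof. by have [EW _] := W_walk i; rewrite {1}EW. Qed.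

Lemma spine_sub_walk i : {subset walk_spine (W i) <= W i}.
Proof.
have [EW PW] := W_walk i; have [_ _ _ Sq] := shorten_walk PW.
by move=> z; rewrite walk_spineE {2}EW !inE => /predU1P [->|/Sq ->]; rewrite ?eqxx ?orbT.
Qed.

Lemma spine_is_tpath i : is_tpath e (walk_spine (W i)).
Proof.
by have [_ PW] := W_walk i; have [Pq Uq _ _] := shorten_walk PW; rewrite walk_spineE; apply/andP.
Qed.

(* Robot j can perform the excursion a b ... b a of robot i instead: deleting it
   from W i saves its length plus two, splicing it into W j costs its length. *)
Lemma excursion_not_shared i j u1 b l w v : i != j ->
  W i = s i :: u1 ++ b :: l ++ last (s i) u1 :: w ->
  last b l = b -> last (s i) u1 != b -> v \in b :: l -> v \notin W j.
Proof.
move=> ij EW Ll ab Hv; apply/negP => Hvj.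
have [_ PW] := W_walk i; move: PW; rewrite EW /= !path_cat_cons Ll.
case/and3P => P1 _ /and3P [P2 _ P3].
have [l' [Pl' Ll' Wl' Sl']] := rotate_closed_walk P2 Ll Hv.
have [EWj PWj] := W_walk j; rewrite EWj in Hvj.
have [m' [Pm Wm Sm]] := splice_closed_walk PWj Hvj Pl' Ll'.
have := @optimal_walk2 i j (s i :: u1 ++ last (s i) u1 :: w) (s j :: m') ij.
rewrite /walk_from !eqxx /= path_cat_cons P1 srel_refl P3 Pm => /(_ isT isT).
have Si : {subset W i <= ((s i :: u1) ++ (last (s i) u1 :: w)) ++ s j :: m'}.
  have EW' : W i = (s i :: u1) ++ (b :: l) ++ (last (s i) u1 :: w) by rewrite EW.
  move=> z; rewrite EW' !mem_cat => /or3P [->|H|->]; rewrite ?orbT //.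
  by rewrite Sm ?orbT // mem_cat Sl' ?orbT.
have Sj : {subset W j <= s j :: m'} by move=> z; rewrite EWj => H; rewrite Sm // mem_cat H.
move=> /(_ Si Sj); rewrite EW Wm -EWj Wl' !wlen_cat_cons Ll eqxx ab (eq_sym b) ab.
move: (wlen (s i :: u1)) (wlen (b :: l)) (wlen (last (s i) u1 :: w)) (wlen (W j)).
by move=> n1 n2 n3 n4 /=; clear; lia.
Qed.

Section Robot.
Variable i : 'I_k.
Local Notation u := (behead (W i)).
Local Notation q := (shorten (s i) (behead (W i))).
Local Notation c := (s i :: q).
Local Notation F := (walk_forest (W i)).

Lemma spine_srel_path : path srel (s i) q.
Proof.
by have [_ PW] := W_walk i; have [Pq _ _ _] := shorten_walk PW; exact: (sub_path srel_edge Pq).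
Qed.

Lemma odd_cross_walk x y : e x y ->
  odd (count (cross x y) (steps (W i))) = has (cross x y) (steps c).
Proof.
move=> exy; have [EW PW] := W_walk i; have [_ Uq Lq _] := shorten_walk PW.
have := connect_avoid_parity exy spine_srel_path; rewrite Lq connect_avoid_parity // -EW.
move=> /negb_inj ->; have := count_cross_uniq x y Uq.
by rewrite has_count; case: (count _ _) => [|[]].
Qed.

Lemma trav_spine E : E \in pedges (walk_spine (W i)) -> trav (W i) E = 1.
Proof.
rewrite walk_spineE; case/imsetP => [[a b] Hab ->].
have [_ PW] := W_walk i; have [Pq _ _ _] := shorten_walk PW.
have eab : e a b by move: Pq; rewrite path_steps => /allP /(_ _ Hab).
rewrite /edge_of /= trav_cross ?edge_neq //.
have : odd (count (cross a b) (steps (W i))).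
  by rewrite odd_cross_walk //; apply/hasP; exists (a, b); rewrite // /cross eqxx.
by have := count_cross_le2 i eab; case: (count _ _) => [|[|[]]].
Qed.

Lemma forest_edge E : E \in F -> exists x y, E = [set x; y].
Proof. by rewrite in_setD => /andP [_ /wedges_edge]. Qed.

Lemma forest_adj x y : [set x; y] \in F ->
  [/\ e x y, x \in W i, y \in W i & ~~ has (cross x y) (steps c)].
Proof.
rewrite inE walk_spineE => /andP [NP]; rewrite inE /trav -has_count.
case/hasP => [[a b] Hab /andP [/= ab /eqP HE]].
have xy : x != y.
  apply: contraNneq ab => Exy.
  have : a \in [set x; y] by rewrite -HE set21.
  have : b \in [set x; y] by rewrite -HE set22.
  by rewrite -Exy setUid !in_set1 => /eqP -> /eqP ->.
have Cab : cross x y (a, b) by rewrite -edge_of_cross // HE.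
have /andP [Ha Hb] := mem_steps Hab.
have eab := srel_neq_edge (walk_steps_srel Hab) ab.
have exy : e x y by case/crossP: Cab eab => [] [-> ->]; rewrite // e_sym.
have /andP [Hx Hy] : (x \in W i) && (y \in W i).
  by case/crossP: Cab Ha Hb => [] [-> ->] -> ->.
by split => //; rewrite -mem_pedges2.
Qed.

Lemma trav_forest E : E \in F -> trav (W i) E = 2.
Proof.
move=> Fxy; have [x [y Exy]] := forest_edge Fxy; subst E.
have [exy _ _ Nc] := forest_adj Fxy.
move: Fxy; rewrite inE => /andP [_]; rewrite inE !trav_cross ?edge_neq //.
have := odd_cross_walk exy; rewrite (negbTE Nc).
by have := count_cross_le2 i exy; case: (count _ _) => [|[|[]]].
Qed.

Lemma split_off_spine v : v \in W i -> v \notin c -> exists u1 b l w,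
  [/\ W i = s i :: u1 ++ b :: l ++ last (s i) u1 :: w, last b l = b,
      last (s i) u1 \in c, all [predC c] (b :: l) & v \in b :: l].
Proof.
move=> Hv Nv; have [EW PW] := W_walk i; have [_ _ Lq _] := shorten_walk PW.
have Hvu : v \in u.
  by move: Hv; rewrite {1}EW inE => /predU1P [Evs|//]; rewrite Evs mem_head in Nv.
have Ht : last (s i) u \in c by rewrite -Lq mem_last.
have [u1 [[|b l] [d [w [Eu Ha Hd Abl Hvm]]]]] :=
  split_excursion (X := fun z => z \in c) (mem_head (s i) q) Ht Hvu Nv; first by [].
have /andP [Nb Al] := Abl.
rewrite Eu in PW; move: PW; rewrite !path_cat_cons => /and3P [_ Sab /and3P [Pl Sd _]].
have eab : e (last (s i) u1) b.
  by apply: srel_neq_edge Sab _; apply: contraNneq Nb => <-.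
have [Eda Ll] := excursion_returns spine_srel_path Ha Hd Nb eab Pl Al Sd.
by exists u1, b, l, w; split => //; rewrite {1}EW Eu -Eda.
Qed.

Lemma off_spine_private v j : v \in W i -> v \notin c -> j != i -> v \notin W j.
Proof.
move=> Hv Nv ji; have [u1 [b [l [w [EW Ll Ha /andP [Nb _] Hvb]]]]] := split_off_spine Hv Nv.
apply: excursion_not_shared EW Ll _ Hvb; first by rewrite eq_sym.
by apply: contraNneq Nb => <-.
Qed.

Lemma forest_private E j : E \in F -> j != i -> trav (W j) E = 0.
Proof.
move=> Fxy ji; have [x [y Exy]] := forest_edge Fxy; subst E.
have [exy Hx Hy Nc] := forest_adj Fxy.
have [v [Hv Nv Hvxy]] : exists v, [/\ v \in W i, v \notin c & v \in [:: x; y]].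
  have [Hxc|] := boolP (x \in c); last by exists x; split; rewrite // inE eqxx.
  have [Hyc|] := boolP (y \in c); last by exists y; split; rewrite // !inE eqxx orbT.
  by case/negP: Nc; apply: walk_crosses_edge spine_srel_path Hxc Hyc exy.
rewrite trav_cross ?edge_neq //; apply/eqP; rewrite -leqn0 leqNgt -has_count.
apply/negP => /has_cross_mem /andP [Hxj Hyj].
by case/negP: (off_spine_private Hv Nv ji); move: Hvxy; rewrite !inE => /orP [] /eqP ->.
Qed.

Lemma step_in_forest (p : V * V) : p \in steps (W i) -> p.1 \notin c ->
  connect (fadj F) p.1 p.2.
Proof.
case: p => a b /= Hab Na; have [->|ab] := eqVneq a b; first exact: connect0.
apply: connect1; rewrite /fadj inE walk_spineE mem_pedges2 // inE /trav -has_count.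
apply/andP; split; first by apply: contra Na => /has_cross_mem /andP [].
by apply/hasP; exists (a, b); rewrite // ab /edge_of eqxx.
Qed.

Lemma forest_reaches_spine x : x \in W i -> x \notin c ->
  exists2 a, a \in c & connect (fadj F) x a.
Proof.
move=> Hx Nx; have [u1 [b [l [w [EW _ Ha Al Hxb]]]]] := split_off_spine Hx Nx.
have EW' : W i = (s i :: u1) ++ (b :: l) ++ (last (s i) u1 :: w) by rewrite EW.
exists (last (s i) u1) => //; case/splitPr: Hxb EW' Al => l1 l2 EW' Al.
have Ssub : {subset steps (x :: rcons l2 (last (s i) u1)) <= steps (W i)}.
  have -> : W i = ((s i :: u1) ++ l1) ++ x :: rcons l2 (last (s i) u1) ++ w.
    by rewrite EW' cat_rcons -!catA.
  exact: steps_infix.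
apply: (@connect_sub _ (fun y z => connect (fadj F) y z)) => //.
apply/connectP; exists (rcons l2 (last (s i) u1)); rewrite ?last_rcons //.
rewrite path_steps; apply/allP => p Hp; apply: step_in_forest; first exact: Ssub.
apply: (allP Al); rewrite mem_cat; apply/orP; right.
move: Hp; rewrite -cats1 steps_cat mem_cat => /orP [/mem_steps /andP [] // |].
by rewrite /steps /= inE => /eqP ->; apply: mem_last.
Qed.

Lemma forest_path_spine a l : a \in c -> path (fadj F) a l -> last a l \in c ->
  last a l = a.
Proof.
have Pc := spine_srel_path.
have Fs : subrel (fadj F) srel by move=> x y /forest_adj [exy _ _ _]; apply: srel_edge.
move: {2}(size l) (leqnn (size l)) => n.
elim: n l a => [|n IH] [|z l] a //= Hn Ha /andP [Faz Pl] Hl.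
have [eaz _ _ Naz] := forest_adj Faz.
have Nz : z \notin c by apply: contra Naz => Hz; apply: walk_crosses_edge Pc Ha Hz eaz.
have Hhas : has (fun y => y \in c) l.
  case: l Pl Hl {Hn} => [|z' l] _ Hl; first by rewrite Hl in Nz.
  by apply/hasP; exists (last z' l); rewrite ?mem_last.
case/split_find: Hhas Pl Hl Hn => d o1 o3 Hd No1 Pl Hl Hn.
move: Pl; rewrite cat_path rcons_path => /andP [/andP [P1 Fd] P3].
rewrite last_cat last_rcons in Hl.
have Ao1 : all [predC c] o1 by apply/allP => y /(hasPn No1).
have [Eda _] := excursion_returns Pc Ha Hd Nz eaz (sub_path Fs P1) Ao1 (Fs _ _ Fd).
subst d; rewrite last_cat last_rcons in P3 *.
apply: (IH _ _ _ Ha P3 Hl); rewrite ltnS in Hn; apply: leq_trans Hn.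
by rewrite size_cat leq_addl.
Qed.

Lemma wedges_spine_forest : wedges (W i) = pedges (walk_spine (W i)) :|: F.
Proof.
apply/setP => E; rewrite in_setU in_setD.
by case HE: (E \in pedges _) => //=; rewrite inE (trav_spine HE).
Qed.

Lemma spine_forest_disjoint : pedges (walk_spine (W i)) :&: F = set0.
Proof. by apply/setP => E; rewrite in_setI in_setD in_set0; case: (E \in _). Qed.

Lemma fverts_walk x : x \in fverts F -> x \in W i.
Proof.
case/bigcupP => E FE HxE; have [a [b Eab]] := forest_edge FE; subst E.
have [_ Ha Hb _] := forest_adj FE.
by move: HxE; rewrite in_set2 => /orP [] /eqP ->.
Qed.

Lemma fconnect_walk x y : connect (fadj F) x y -> x \in W i -> y \in W i.
Proof.
case/connectP => l + ->; elim: l x => [|z l IH] x //= /andP [Fxz Pl] _.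
by apply: IH Pl _; have [_ _ ? _] := forest_adj Fxz.
Qed.

Lemma forest_component_meets_spines x : x \in fverts F ->
  #|fcomp F x :&: \bigcup_(r < k) [set v in walk_spine (W r)]| = 1.
Proof.
move=> Hx; have HxW := fverts_walk Hx.
have [a Ha Kxa] : exists2 a, a \in c & connect (fadj F) x a.
  have [Hxc|Nxc] := boolP (x \in c); first by exists x => //; apply: connect0.
  exact: forest_reaches_spine.
apply/eqP/cards1P; exists a; apply/setP => y; rewrite in_setI in_set1 /fcomp inE.
apply/andP/eqP => [[Kxy /bigcupP [r _]] | ->]; last first.
  by split => //; apply/bigcupP; exists i; rewrite // inE walk_spineE.
rewrite inE => Hyr; have HyW := fconnect_walk Kxy HxW.
have Hyc : y \in c.
  have [Eri|ri] := eqVneq r i; first by rewrite -walk_spineE -Eri.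
  apply/negPn/negP => Nyc.
  by move: (off_spine_private HyW Nyc ri); rewrite (spine_sub_walk Hyr).
have /connectP [l Pl Ey] : connect (fadj F) a y.
  by apply: connect_trans Kxy; rewrite (sym_connect_sym (fadj_sym F)).
by rewrite Ey; apply: forest_path_spine Ha Pl _; rewrite -Ey.
Qed.

End Robot.

Lemma forest_verts_private (j l : 'I_k) : j != l ->
  fverts (walk_forest (W j)) :&: fverts (walk_forest (W l)) \subset
  \bigcup_(r < k) [set v in walk_spine (W r)].
Proof.
move=> jl; apply/subsetP => v; rewrite in_setI => /andP [/fverts_walk Hj /fverts_walk Hl].
apply/bigcupP; exists j => //; rewrite inE walk_spineE; apply/negPn/negP => Nv.
by have := @off_spine_private j v l Hj Nv; rewrite eq_sym jl Hl => /(_ isT).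
Qed.

End Optimal.
End Tree.

Theorem lemma1 (V : finType) (e : rel V) (k : nat) (s : 'I_k -> V)
  (W : 'I_k -> seq V) :
  is_tree e -> 0 < k ->
  is_strategy e s W -> covering W ->
  (forall W' : 'I_k -> seq V, is_strategy e s W' -> covering W' ->
     slen W <= slen W') ->
  exists (P : 'I_k -> seq V) (F : 'I_k -> {set {set V}}),
    let PV := \bigcup_(r < k) [set v in P r] in
    (forall i : 'I_k,
      [/\ is_tpath e (P i) /\ {subset P i <= W i},
          wedges (W i) = pedges (P i) :|: F i /\ pedges (P i) :&: F i = set0,
          (* (a) *)
          (forall E, E \in pedges (P i) -> trav (W i) E = 1),
          (* (b) *)
          (forall E, E \in F i ->
             trav (W i) E = 2 /\ (forall j : 'I_k, j != i -> trav (W j) E = 0)) &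
          (* (c) *)
          (forall x, x \in fverts (F i) -> #|fcomp (F i) x :&: PV| = 1)])
    /\
    (* (d) *)
    (forall j l : 'I_k, j != l -> fverts (F j) :&: fverts (F l) \subset PV).
Proof.
move=> Ht _ Hstr Hcov Hmin.
exists (fun i => walk_spine (W i)), (fun i => walk_forest (W i)) => /=.
split=> [i|j l]; last exact: (forest_verts_private Ht Hstr Hcov Hmin).
split.
- by split; [exact: (spine_is_tpath Hstr) | exact: (spine_sub_walk Hstr)].
- split; [exact: (wedges_spine_forest Ht Hstr Hcov Hmin) | exact: spine_forest_disjoint].
- exact: (trav_spine Ht Hstr Hcov Hmin).
- move=> E FE; split; first exact: (trav_forest Ht Hstr Hcov Hmin FE).
  by move=> j; exact: (forest_private Ht Hstr Hcov Hmin FE).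
- exact: (forest_component_meets_spines Ht Hstr Hcov Hmin).
Qed.
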